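(* Let $\mathbf{A}\in\mathbb{C}^{n\times n}$, let $\mathbf{b}\in\mathbb{C}^n$ be nonzero, and let $k\geq 1$ be such that the Arnoldi algorithm applied to $(\mathbf{A},\mathbf{b})$ does not break down before step $k$, i.e. $\dim\mathcal{K}_{k+1}(\mathbf{A},\mathbf{b})=k+1$. Then \[ \min_{0\leq j\leq k}\|\mathbf{r}_j^{\mathrm{F}}\|_2 \;\leq\; \sqrt{k+1}\,\cdot\,\|\mathbf{r}_k^{\mathrm{G}}\|_2 . \]
   Context: The Krylov subspace is $\mathcal{K}_k(\mathbf{A},\mathbf{b})=\operatorname{span}\{\mathbf{b},\mathbf{A}\mathbf{b},\dots,\mathbf{A}^{k-1}\mathbf{b}\}$. The Arnoldi algorithm produces an orthonormal basis $\mathbf{Q}_k=[\mathbf{q}_1,\dots,\mathbf{q}_k]$ of $\mathcal{K}_k(\mathbf{A},\mathbf{b})$ with $\mathbf{q}_1=\mathbf{b}/\|\mathbf{b}\|_2$, and a $(k+1)\times k$ upper Hessenberg matrix $\mathbf{H}_{k+1,k}$ (entries $h_{i,j}$, with $h_{j+1,j}>0$) satisfying $\mathbf{A}\mathbf{Q}_k=\mathbf{Q}_{k+1}\mathbf{H}_{k+1,k}$; $\mathbf{H}_k$ denotes $\mathbf{H}_{k+1,k}$ with its last row deleted. With $\mathbf{e}_1=[1,0,\dots,0]^{\mathsf T}$, the FOM and GMRES iterates (zero initial guess, $\mathbf{x}_0^{\mathrm F}=\mathbf{x}_0^{\mathrm G}=\mathbf{0}$) are, for $j\ge1$, $\mathbf{x}_j^{\mathrm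 F}=\|\mathbf{b}\|_2\mathbf{Q}_j\mathbf{H}_j^{-1}\mathbf{e}_1$ and $\mathbf{x}_j^{\mathrm G}=\|\mathbf{b}\|_2\mathbf{Q}_j\mathbf{H}_{j+1,j}^{\dagger}\mathbf{e}_1$ ($\dagger$ = pseudoinverse); equivalently $\mathbf{x}_j^{\mathrm G}$ minimizes $\|\mathbf{b}-\mathbf{A}\mathbf{x}\|_2$ over $\mathbf{x}\in\mathcal{K}_j(\mathbf{A},\mathbf{b})$. Residuals: $\mathbf{r}_j^{\mathrm F}=\mathbf{b}-\mathbf{A}\mathbf{x}_j^{\mathrm F}$, $\mathbf{r}_j^{\mathrm G}=\mathbf{b}-\mathbf{A}\mathbf{x}_j^{\mathrm G}$ (so $\mathbf{r}_0^{\mathrm F}=\mathbf{r}_0^{\mathrm G}=\mathbf{b}$). Convention: if $\mathbf{H}_j$ is singular, the FOM iterate is undefined and $\|\mathbf{r}_j^{\mathrm F}\|_2$ is defined to be $+\infty$. *)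

From HB Require Import structures.
From mathcomp Require Import all_boot all_order all_algebra.
Set Implicit Arguments. Unset Strict Implicit. Unset Printing Implicit Defensive.
Import Order.TTheory GRing.Theory Num.Theory.
Local Open Scope ring_scope.

Section Krylov.
Variable C : numClosedFieldType.

Definition norm2 n (v : 'cV[C]_n) : C := sqrtC (\sum_i `|v i 0| ^+ 2).

Definition ctrmx m p (M : 'M[C]_(m, p)) : 'M[C]_(p, m) := (map_mx (fun z => z^*) M)^T.

(* Krylov matrix [b, A b, ..., A^(m-1) b]; its column space is K_m(A,b) *)
Definition krylov n (A : 'M[C]_n) (b : 'cV[C]_n) m : 'M[C]_(n, m) :=
  \matrix_(i < n, j < m) ((A ^+ j) *m b) i 0.

Definition mxe m p (M : 'M[C]_(m, p)) (a c : nat) : C :=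
  match @insub _ (fun x => x < m)%N 'I_m a, @insub _ (fun x => x < p)%N 'I_p c with
  | Some a', Some c' => M a' c'
  | _, _ => 0
  end.

Definition leadcols n m (Q : 'M[C]_(n, m)) j : 'M[C]_(n, j) :=
  \matrix_(i < n, l < j) mxe Q i l.
Definition leadblock m p (H : 'M[C]_(m, p)) j : 'M[C]_j :=
  \matrix_(a < j, c < j) mxe H a c.

Definition e1 j : 'cV[C]_j := \col_(a < j) (a == 0%N :> nat)%:R.

Definition arnoldi_output n k (A : 'M[C]_n) (b : 'cV[C]_n)
    (Q : 'M[C]_(n, k.+1)) (H : 'M[C]_(k.+1, k)) : Prop :=
  [/\ ctrmx Q *m Q = 1%:M,
      (forall i : 'I_n, Q i ord0 = (norm2 b)^-1 * b i 0),
      A *m leadcols Q k = Q *m H,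
      (forall (i : 'I_k.+1) (j : 'I_k), (j.+1 < i)%N -> H i j = 0) &
      (forall (i : 'I_k.+1) (j : 'I_k), (i : nat) = j.+1 -> 0 < H i j)].

(* FOM residual r_j^F = b - A x_j^F with x_j^F = ||b|| Q_j H_j^{-1} e_1;
   None (i.e. norm +oo) when H_j is singular. For j = 0, Q_0, H_0 are empty,
   H_0 is invertible and x_0^F = 0, so r_0^F = b. *)
Definition fom_res n k (A : 'M[C]_n) (b : 'cV[C]_n)
    (Q : 'M[C]_(n, k.+1)) (H : 'M[C]_(k.+1, k)) (j : nat) : option 'cV[C]_n :=
  if leadblock H j \in unitmx then
    Some (b - A *m (norm2 b *: (leadcols Q j *m (invmx (leadblock H j) *m e1 j))))
  else None.

End Krylov.

From HB Require Import structures.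
From mathcomp Require Import all_boot all_order all_algebra zify.
Import Order.TTheory GRing.Theory Num.Theory.
Local Open Scope ring_scope.
Set Implicit Arguments. Unset Strict Implicit. Unset Printing Implicit Defensive.

(* Since H is an unreduced upper Hessenberg (k+1) x k matrix, it has a left null vector w
   with w_0 = 1.  Write beta = ||b||.  For j <= k with w_j <> 0 the block H_j is invertible
   and r_j^F = Q s, where s = beta e_1 - H v is supported at the single index j; as w s = beta
   this gives |w_j| ||r_j^F|| = beta.  Every residual b - A x with x in K_k(A,b) is also of
   the form Q s with s = beta e_1 - H v, so beta = |w s| <= max_j |w_j| ||s||_1
   <= max_j |w_j| sqrt(k+1) ||s||_2.  Choosing j with |w_j| maximal gives the bound. *)

Section FomGmres.
Variable C : numClosedFieldType.

Variant mxe_spec m p (M : 'M[C]_(m, p)) (a c : nat) : C -> Type :=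
  | MxeIn (i : 'I_m) (j : 'I_p) of a = i & c = j : mxe_spec M a c (M i j)
  | MxeOut of ((m <= a) || (p <= c))%N : mxe_spec M a c 0.

Lemma mxeP m p (M : 'M[C]_(m, p)) a c : mxe_spec M a c (mxe M a c).
Proof.
rewrite /mxe; case: insubP => [i ai <-|]; last first.
  by rewrite -leqNgt => ma; apply: MxeOut; rewrite ma.
case: insubP => [j cj <-|]; first exact: MxeIn.
by rewrite -leqNgt => pc; apply: MxeOut; rewrite pc orbT.
Qed.

Lemma mxeE m p (M : 'M[C]_(m, p)) (i : 'I_m) (j : 'I_p) : mxe M i j = M i j.
Proof.
case: mxeP => [i' j' /val_inj-> /val_inj-> //|].
by rewrite (ltn_geF (ltn_ord i)) (ltn_geF (ltn_ord j)).
Qed.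

Lemma mxe_oob m p (M : 'M[C]_(m, p)) a c : ((m <= a) || (p <= c))%N -> mxe M a c = 0.
Proof.
by case: mxeP => // i j -> ->; rewrite (ltn_geF (ltn_ord i)) (ltn_geF (ltn_ord j)).
Qed.

Lemma mxe_inj m p (M N : 'M[C]_(m, p)) :
  (forall a c, mxe M a c = mxe N a c) -> M = N.
Proof. by move=> eqMN; apply/matrixP => i j; rewrite -!mxeE. Qed.

Lemma mxe_matrix m p (E : nat -> nat -> C) a c :
  mxe (\matrix_(i < m, j < p) E i j) a c = if ((a < m) && (c < p))%N then E a c else 0.
Proof.
case: mxeP => [i j -> ->|]; first by rewrite mxE !ltn_ord.
by rewrite leqNgt [(p <= c)%N]leqNgt -negb_and => /negbTE->.
Qed.

Lemma mxe_mul m p q (M : 'M[C]_(m, p)) (N : 'M[C]_(p, q)) a c :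
  mxe (M *m N) a c = \sum_(0 <= l < p) mxe M a l * mxe N l c.
Proof.
case: mxeP => [i j -> ->|/orP[ma|qc]].
- by rewrite mxE big_mkord; apply: eq_bigr => l _; rewrite !mxeE.
- by rewrite big1 // => l _; rewrite mxe_oob ?ma ?mul0r.
- by rewrite big1 // => l _; rewrite (mxe_oob N) ?qc ?orbT ?mulr0.
Qed.

Lemma mxeB m p (M N : 'M[C]_(m, p)) a c : mxe (M - N) a c = mxe M a c - mxe N a c.
Proof.
case: mxeP => [i j -> ->|out]; first by rewrite !mxE !mxeE.
by rewrite !mxe_oob ?subr0.
Qed.

Lemma mxeZ m p x (M : 'M[C]_(m, p)) a c : mxe (x *: M) a c = x * mxe M a c.
Proof.
case: mxeP => [i j -> ->|out]; first by rewrite !mxE !mxeE.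
by rewrite mxe_oob ?mulr0.
Qed.

Lemma mxe0 m p a c : mxe (0 : 'M[C]_(m, p)) a c = 0.
Proof. by case: mxeP => // i j _ _; rewrite mxE. Qed.

Lemma mxe_e1 m a c :
  mxe (e1 C m) a c = if ((a < m) && (c < 1))%N then (a == 0%N)%:R else 0.
Proof. exact: (mxe_matrix _ _ (fun a _ => (a == 0%N)%:R)). Qed.

(* Truncates or zero-pads [M], since [mxe] vanishes out of range. *)
Definition resize m p m0 p0 (M : 'M[C]_(m0, p0)) : 'M[C]_(m, p) :=
  \matrix_(a < m, c < p) mxe M a c.

Lemma leadcolsE n m (M : 'M[C]_(n, m)) j : leadcols M j = resize n j M.
Proof. by []. Qed.

Lemma leadblockE m p (M : 'M[C]_(m, p)) j : leadblock M j = resize j j M.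
Proof. by []. Qed.

Lemma mxe_resize m p m0 p0 (M : 'M[C]_(m0, p0)) a c :
  mxe (resize m p M) a c = if ((a < m) && (c < p))%N then mxe M a c else 0.
Proof. exact: mxe_matrix. Qed.

Lemma resize_id m p (M : 'M[C]_(m, p)) : resize m p M = M.
Proof. by apply/matrixP => i j; rewrite mxE mxeE. Qed.

Lemma resize_resize m p m' p' m0 p0 (M : 'M[C]_(m0, p0)) :
  (minn m m0 <= m')%N -> (minn p p0 <= p')%N ->
  resize m p (resize m' p' M) = resize m p M.
Proof.
move=> le_m le_p; apply/matrixP => i j; rewrite !mxE mxe_resize.
case: ifP => // /negbT; rewrite negb_and -!leqNgt => out.
by rewrite mxe_oob //; move: (ltn_ord i) (ltn_ord j) out; lia.
Qed.

Lemma sum_nat_trunc (F : nat -> C) s t :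
  (forall l, (s <= l)%N -> F l = 0) -> (s <= t)%N ->
  \sum_(0 <= l < t) F l = \sum_(0 <= l < s) F l.
Proof.
move=> F0 le_st; rewrite (@big_cat_nat _ _ _ s 0 t _ _ (leq0n s) le_st) /=.
rewrite [X in _ + X]big1_seq ?addr0 // => l /andP[_].
by rewrite mem_index_iota => /andP[/F0].
Qed.

Lemma mxe_mul_resize m p q r m0 (M : 'M[C]_(m0, p)) (N : 'M[C]_(q, r)) a c :
  (a < m)%N -> mxe (resize m q M *m N) a c = mxe (M *m resize p r N) a c.
Proof.
move=> am; pose F l := mxe M a l * mxe N l c.
have F0 l : (minn p q <= l)%N -> F l = 0.
  rewrite geq_min /F => /orP[pl|ql]; first by rewrite (mxe_oob M) ?pl ?orbT ?mul0r.
  by rewrite (mxe_oob N) ?ql ?mulr0.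
rewrite !mxe_mul; transitivity (\sum_(0 <= l < q) F l).
  by apply: eq_big_nat => l /andP[_ lq]; rewrite mxe_resize am lq.
rewrite (sum_nat_trunc F0 (geq_minr p q)) -(sum_nat_trunc F0 (geq_minl p q)).
apply: eq_big_nat => l /andP[_ lp]; rewrite mxe_resize lp /= /F.
by case: ltnP => // rc; rewrite (mxe_oob N) ?rc ?orbT ?mulr0.
Qed.

Lemma mul_resize m p q r (M : 'M[C]_(m, p)) (N : 'M[C]_(q, r)) :
  resize m q M *m N = M *m resize p r N.
Proof.
apply: mxe_inj => a c; case: (ltnP a m) => [am|ma]; first exact: mxe_mul_resize.
by rewrite !mxe_oob ?ma.
Qed.

Lemma sum_nat_only1 (F : nat -> C) N j :
  (forall l, (l < N)%N -> l != j -> F l = 0) ->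
  \sum_(0 <= l < N) F l = if (j < N)%N then F j else 0.
Proof.
move=> F0; rewrite (bigID (pred1 j)) /= [X in _ + X]big1_seq ?addr0 ?big_nat1_eq //.
by move=> l /andP[lj]; rewrite mem_index_iota => /andP[_ /F0]; apply.
Qed.

Definition vanishes_from m (z : 'cV[C]_m) j := forall i, (j <= i)%N -> mxe z i 0 = 0.

Lemma vanishes_from_size m (z : 'cV[C]_m) : vanishes_from z m.
Proof. by move=> i mi; rewrite mxe_oob ?mi. Qed.

Lemma vanishes_fromW m (z : 'cV[C]_m) i j :
  (i <= j)%N -> vanishes_from z i -> vanishes_from z j.
Proof. by move=> ij z0 l jl; apply: z0; apply: leq_trans jl. Qed.

Lemma vanishes_from_resize m m0 (z : 'cV[C]_m0) j :
  vanishes_from z j -> vanishes_from (resize m 1 z) j.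
Proof. by move=> z0 i ji; rewrite mxe_resize z0 // if_same. Qed.

Lemma resize_vanishes m p (z : 'cV[C]_m) :
  vanishes_from z p -> resize m 1 (resize p 1 z) = z.
Proof.
move=> z0; apply/matrixP => i j; rewrite (ord1 j) !mxE mxe_resize -[z i 0]mxeE andbT.
by case: ltnP => // /z0 ->.
Qed.

Lemma mulmx_vanishes n m p (M : 'M[C]_(n, m)) (z : 'cV[C]_m) :
  vanishes_from z p -> M *m z = resize n p M *m resize p 1 z.
Proof. by move=> z0; rewrite mul_resize resize_vanishes. Qed.

Definition upper_hessenberg m p (M : 'M[C]_(m, p)) :=
  forall a c, (c.+1 < a)%N -> mxe M a c = 0.

Lemma hessenberg_mul_vanishes m p (M : 'M[C]_(m, p)) (z : 'cV[C]_p) j :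
  upper_hessenberg M -> vanishes_from z j -> vanishes_from (M *m z) j.+1.
Proof.
move=> hessM z0 i ji; rewrite mxe_mul big1 // => l _.
have [lj|jl] := ltnP l j; last by rewrite z0 ?mulr0.
by rewrite hessM ?mul0r //; apply: leq_trans ji.
Qed.

Lemma norm2_ge0 m (v : 'cV[C]_m) : 0 <= norm2 v.
Proof. by rewrite sqrtC_ge0 sumr_ge0 // => i _; rewrite exprn_ge0. Qed.

Lemma norm2_eq0 m (v : 'cV[C]_m) : (norm2 v == 0) = (v == 0).
Proof.
apply/idP/eqP => [|->].
  2: by rewrite /norm2 big1 ?sqrtC0 // => i _; rewrite mxE normr0 expr0n.
rewrite sqrtC_eq0 psumr_eq0 => [/allP v0|i _]; last by rewrite exprn_ge0.
apply/matrixP => i j; rewrite (ord1 j) mxE.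
by move: (v0 i (mem_index_enum i)); rewrite expf_eq0 normr_eq0 => /eqP.
Qed.

Lemma ctrmx_mul m p q (M : 'M[C]_(m, p)) (N : 'M[C]_(p, q)) :
  ctrmx (M *m N) = ctrmx N *m ctrmx M.
Proof.
apply/matrixP => i j; rewrite !mxE rmorph_sum; apply: eq_bigr => l _.
by rewrite !mxE rmorphM mulrC.
Qed.

Lemma norm2_isometry n p (Q : 'M[C]_(n, p)) (v : 'cV[C]_p) :
  ctrmx Q *m Q = 1%:M -> norm2 (Q *m v) = norm2 v.
Proof.
have sumsqE m (u : 'cV[C]_m) : \sum_i `|u i 0| ^+ 2 = (ctrmx u *m u) 0 0.
  by rewrite mxE; apply: eq_bigr => i _; rewrite !mxE normCK mulrC.
move=> QQ; rewrite /norm2 !sumsqE ctrmx_mul -mulmxA (mulmxA (ctrmx Q)) QQ.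
by rewrite mul1mx.
Qed.

Lemma mulmx_supp1 p m (M : 'M[C]_(p, m)) (u : 'cV[C]_m) (J : 'I_m) :
  (forall i, i != J -> u i 0 = 0) -> forall i, (M *m u) i 0 = M i J * u J 0.
Proof.
by move=> u0 i; rewrite mxE (bigD1 J) //= big1 ?addr0 // => l /u0->; rewrite mulr0.
Qed.

Lemma mulmx_e1 p m (M : 'M[C]_(p, m.+1)) i : (M *m e1 C m.+1) i 0 = M i 0.
Proof.
rewrite (@mulmx_supp1 _ _ _ _ ord0) => [|l]; first by rewrite mxE mulr1.
by rewrite mxE -(inj_eq val_inj) => /negbTE->.
Qed.

Lemma norm2_supp1 m (u : 'cV[C]_m) (J : 'I_m) :
  (forall i, i != J -> u i 0 = 0) -> norm2 u = `|u J 0|.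
Proof.
move=> u0; rewrite /norm2 (bigD1 J) //= big1 ?addr0 ?sqrCK //.
by move=> i /u0->; rewrite normr0 expr0n.
Qed.

Lemma sqr_sum_le m (a : 'I_m -> C) :
  (forall i, 0 <= a i) -> (\sum_i a i) ^+ 2 <= m%:R * \sum_i a i ^+ 2.
Proof.
move=> a_ge0; rewrite -(ler_pMn2r (isT : (0 < 2)%N)).
have -> : (\sum_i a i) ^+ 2 *+ 2 = \sum_i \sum_j a i * a j *+ 2.
  by rewrite expr2 mulr_suml -sumrMnl; apply: eq_bigr => i _; rewrite mulr_sumr -sumrMnl.
have <- : \sum_i \sum_j (a i ^+ 2 + a j ^+ 2) = (m%:R * \sum_i a i ^+ 2) *+ 2.
  under eq_bigr do rewrite big_split /= sumr_const card_ord.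
  by rewrite big_split /= sumr_const card_ord sumrMnl mulr_natl mulr2n.
apply: ler_sum => i _; apply: ler_sum => j _.
exact: (real_leif_mean_square_scaled (ger0_real (a_ge0 i)) (ger0_real (a_ge0 j))).1.
Qed.

Lemma sum_norm_le_norm2 m (v : 'cV[C]_m) : \sum_i `|v i 0| <= sqrtC m%:R * norm2 v.
Proof.
have S_ge0 : 0 <= \sum_i `|v i 0| by rewrite sumr_ge0.
rewrite -sqrtCM ?qualifE /= ?ler0n ?sumr_ge0 // => [|i _]; last by rewrite exprn_ge0.
rewrite -{1}(sqrCK S_ge0) ler_sqrtC ?qualifE /= ?exprn_ge0 ?mulr_ge0 ?ler0n ?sumr_ge0 //.
  exact: sqr_sum_le.
by move=> i _; rewrite exprn_ge0.
Qed.

Lemma norm_mulmx_le m (w : 'rV[C]_m) (s : 'cV[C]_m) (J : 'I_m) :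
  (forall i, `|w 0 i| <= `|w 0 J|) ->
  `|(w *m s) 0 0| <= `|w 0 J| * (sqrtC m%:R * norm2 s).
Proof.
move=> maxJ; rewrite mxE (le_trans (ler_norm_sum _ _ _)) //.
rewrite (le_trans _ (ler_wpM2l (normr_ge0 _) (sum_norm_le_norm2 s))) // mulr_sumr.
by apply: ler_sum => i _; rewrite normrM ler_wpM2r.
Qed.

Lemma exists_argmax_real (I : finType) (i0 : I) (f : I -> C) :
  (forall i, f i \is Num.real) -> exists j, forall i, f i <= f j.
Proof.
move=> f_real.
have [j _ maxj] : exists2 j, j \in i0 :: enum I & {in i0 :: enum I, forall i, f i <= f j}.
  elim: (enum I) => [|x s [j sj maxj]].
    by exists i0 => [|i]; rewrite mem_seq1 // => /eqP->.
  have mem_xs i : (i \in i0 :: x :: s) = (i == x) || (i \in i0 :: s).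
    by rewrite !inE orbCA.
  case/orP: (real_leVge (f_real j) (f_real x)) => [fjx|fxj].
    exists x => [|i]; first by rewrite mem_xs eqxx.
    by rewrite mem_xs => /orP[/eqP->//|/maxj/le_trans]; apply.
  exists j => [|i]; first by rewrite mem_xs sj orbT.
  by rewrite mem_xs => /orP[/eqP->//|/maxj].
by exists j => i; apply: maxj; rewrite inE mem_enum orbT.
Qed.

Lemma mulmx_residual_e1 m p (w : 'rV[C]_m.+1) (M : 'M[C]_(m.+1, p)) x v :
  w *m M = 0 -> w 0 0 = 1 -> (w *m (x *: e1 C m.+1 - M *m v)) 0 0 = x.
Proof.
move=> wM w0; rewrite mulmxBr mulmxA wM mul0mx subr0 -scalemxAr mxE.
by rewrite mulmx_e1 w0 mulr1.
Qed.

Section UnreducedHessenberg.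
Variables (k : nat) (H : 'M[C]_(k.+1, k)).
Hypothesis H_hess : upper_hessenberg H.
Hypothesis H_subdiag : forall c, (c < k)%N -> mxe H c.+1 c != 0.

Lemma hessenberg_mulmx_eq0 (z : 'cV[C]_k) : H *m z = 0 -> z = 0.
Proof.
move=> Hz; suff z0 t : vanishes_from z (k - t).
  by apply/matrixP => i j; rewrite (ord1 j) -mxeE mxE (z0 k) // subnn.
elim: t => [|t IHt]; first by rewrite subn0; apply: vanishes_from_size.
move=> c le_c; have [/IHt//|lt_c] := leqP (k - t) c.
have ck : (c < k)%N by lia.
have /eqP := congr1 (fun M => mxe M c.+1 0) Hz.
rewrite /= mxe0 mxe_mul (@sum_nat_only1 _ _ c) => [|l _ lc].
  by rewrite ck mulf_eq0 (negbTE (H_subdiag ck)) => /eqP.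
have [l_lt_c|c_lt_l|/eqP] := ltngtP l c; last by rewrite (negbTE lc).
  by rewrite H_hess ?mul0r.
by rewrite IHt ?mulr0 //; lia.
Qed.

Lemma hessenberg_left_kernel : exists w : 'rV[C]_k.+1, w *m H = 0 /\ w 0 0 = 1.
Proof.
have : kermx H != 0.
  by rewrite kermx_eq0 /row_free; apply: contraL (rank_leq_col H) => /eqP->; rewrite ltnn.
case/rowV0Pn => v /sub_kermxP vH v_neq0.
suff v00 : v 0 0 != 0.
  by exists ((v 0 0)^-1 *: v); rewrite -scalemxAl vH scaler0 mxE mulVf.
apply: contra v_neq0 => /eqP v00; apply/eqP.
suff v0 t : (t <= k)%N -> forall i, (i <= t)%N -> mxe v 0 i = 0.
  by apply/matrixP => i j; rewrite (ord1 i) -mxeE mxE (v0 k) // -ltnS.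
elim: t => [_ i|t IHt tk i]; first by rewrite leqn0 => /eqP->; rewrite (mxeE v ord0 ord0).
rewrite leq_eqVlt => /orP[/eqP->|]; last by apply: IHt; apply: ltnW.
have /eqP := congr1 (fun M => mxe M 0 t) vH.
rewrite /= mxe0 mxe_mul (@sum_nat_only1 _ _ t.+1) => [|l _ lt].
  by rewrite ltnS tk mulf_eq0 (negbTE (H_subdiag tk)) orbF => /eqP.
have [l_le_t|t_lt_l] := leqP l t; first by rewrite IHt ?mul0r //; apply: ltnW.
by rewrite H_hess ?mulr0 // ltn_neqAle eq_sym lt.
Qed.

Lemma hessenberg_lead_residual_supp (J : 'I_k.+1) (y : 'cV[C]_J) (u : 'cV[C]_k.+1) :
  (forall i, (i < J)%N -> mxe (resize J J H *m y) i 0 = mxe u i 0) ->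
  vanishes_from u J.+1 ->
  forall i : 'I_k.+1, i != J -> (u - H *m resize k 1 y) i 0 = 0.
Proof.
move=> eq_lead u0 i iJ; rewrite -mxeE mxeB.
have [i_lt_J|J_lt_i|/val_inj eq_iJ] := ltngtP i J; last by rewrite eq_iJ eqxx in iJ.
  by rewrite -(@mxe_mul_resize J) // eq_lead // subrr.
have Hy0 := hessenberg_mul_vanishes H_hess (vanishes_from_resize k (vanishes_from_size y)).
by rewrite u0 // Hy0 // subr0.
Qed.

Lemma hessenberg_leadblock_unit (w : 'rV[C]_k.+1) (J : 'I_k.+1) :
  w *m H = 0 -> w 0 J != 0 -> resize J J H \in unitmx.
Proof.
(* If H_J z = 0, then H z (z zero-padded) is supported at J and killed by w, so it vanishes;
   and H has full column rank. *)
move=> wH wJ; rewrite -unitmx_tr -row_free_unit; apply: inj_row_free => v vHJ.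
apply: trmx_inj; rewrite trmx0; set z := v^T.
have HJz : resize J J H *m z = 0 by apply: trmx_inj; rewrite trmx_mul trmxK vHJ trmx0.
have s_supp : forall i, i != J -> (0 - H *m resize k 1 z) i 0 = 0.
  by apply: hessenberg_lead_residual_supp => [i _|i _]; rewrite ?HJz !mxe0.
have sJ : (0 - H *m resize k 1 z) J 0 = 0.
  have := mulmx_supp1 w s_supp 0.
  rewrite mulmxBr mulmx0 mulmxA wH mul0mx subrr mxE => /esym/eqP.
  by rewrite mulf_eq0 (negbTE wJ) => /eqP.
have /hessenberg_mulmx_eq0 z0 : H *m resize k 1 z = 0.
  apply/eqP; rewrite -oppr_eq0 -sub0r; apply/eqP/matrixP => i j.
  by rewrite (ord1 j) [RHS]mxE; case: (eqVneq i J) => [->|/s_supp].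
have Jk : (minn J J <= k)%N by rewrite minnn -ltnS.
rewrite -[z]resize_id -(@resize_resize _ _ k 1) // z0.
by apply/matrixP => i j; rewrite !mxE mxe0.
Qed.
End UnreducedHessenberg.

Section Arnoldi.
Variables (n k : nat) (A : 'M[C]_n) (b : 'cV[C]_n).
Variables (Q : 'M[C]_(n, k.+1)) (H : 'M[C]_(k.+1, k)).
Hypothesis arn : arnoldi_output A b Q H.

Lemma arnoldi_hessenberg : upper_hessenberg H.
Proof. by case: arn => _ _ _ hess _ a c; case: mxeP => // i j -> ->; apply: hess. Qed.

Lemma arnoldi_subdiag c : (c < k)%N -> mxe H c.+1 c != 0.
Proof.
case: arn => _ _ _ _ subdiag ck; have ck1 : (c.+1 < k.+1)%N by [].
by rewrite (mxeE H (Ordinal ck1) (Ordinal ck)) gt_eqF // subdiag.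
Qed.

Lemma arnoldi_rhs : b = Q *m (norm2 b *: e1 C k.+1).
Proof.
have [->|b_neq0] := eqVneq b 0.
  by move: (norm2_eq0 (0 : 'cV[C]_n)); rewrite eqxx => /eqP->; rewrite scale0r mulmx0.
case: arn => _ Q0 _ _ _; apply/matrixP => i j; rewrite (ord1 j) -scalemxAr mxE mulmx_e1.
by rewrite Q0 mulrA mulfV ?mul1r // norm2_eq0.
Qed.

Lemma arnoldi_residual (v : 'cV[C]_k) :
  b - A *m (leadcols Q k *m v) = Q *m (norm2 b *: e1 C k.+1 - H *m v).
Proof.
case: arn => _ _ AQ _ _.
by rewrite mulmxA AQ -mulmxA {1}arnoldi_rhs mulmxBr.
Qed.

Lemma krylov_powers j :
  (j < k)%N -> exists2 y : 'cV[C]_k.+1, A ^+ j *m b = Q *m y & vanishes_from y j.+1.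
Proof.
case: (arn) => _ _ AQ _ _; elim: j => [_|j IHj jk].
  exists (norm2 b *: e1 C k.+1); first by rewrite expr0 mul1mx -arnoldi_rhs.
  by move=> i i_gt0; rewrite mxeZ mxe_e1 eqn0Ngt i_gt0 if_same mulr0.
have [y Ajb y0] := IHj (ltnW jk).
exists (H *m resize k 1 y).
  rewrite exprS -mulmxA Ajb (mulmx_vanishes Q (vanishes_fromW (ltnW jk) y0)).
  by rewrite mulmxA AQ -mulmxA.
exact: hessenberg_mul_vanishes arnoldi_hessenberg (vanishes_from_resize k y0).
Qed.

Lemma krylov_leadcols : exists Y : 'M[C]_k, krylov A b k = leadcols Q k *m Y.
Proof.
have : ((krylov A b k)^T <= (leadcols Q k)^T)%MS.
  apply/row_subP => j; have [y Ajb y0] := krylov_powers (ltn_ord j).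
  have -> : row j (krylov A b k)^T = (A ^+ j *m b)^T.
    by apply/rowP => i; rewrite !mxE.
  by rewrite Ajb (mulmx_vanishes Q (vanishes_fromW (ltn_ord j) y0)) trmx_mul submxMl.
by case/submxP => D KD; exists D^T; rewrite -[krylov _ _ _]trmxK KD trmx_mul trmxK.
Qed.

Lemma fom_res_norm (w : 'rV[C]_k.+1) (J : 'I_k.+1) :
  w *m H = 0 -> w 0 0 = 1 -> w 0 J != 0 ->
  exists2 r, fom_res A b Q H J = Some r & `|w 0 J| * norm2 r = norm2 b.
Proof.
move=> wH w00 wJ.
have HJ_unit := hessenberg_leadblock_unit arnoldi_hessenberg arnoldi_subdiag wH wJ.
rewrite /fom_res leadblockE HJ_unit; eexists => //.
rewrite scalemxAr; set y := norm2 b *: _.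
have HJy : resize J J H *m y = norm2 b *: e1 C J by rewrite -scalemxAr mulKVmx.
have Jk : (minn k.+1 J <= k)%N by rewrite geq_min -[(J <= k)%N]ltnS ltn_ord orbT.
have -> : leadcols Q J *m y = leadcols Q k *m resize k 1 y.
  by rewrite !leadcolsE !mul_resize resize_resize.
case: (arn) => QQ _ _ _ _; rewrite arnoldi_residual norm2_isometry //.
set s := _ - _.
have s_supp : forall i, i != J -> s i 0 = 0.
  rewrite /s; apply: (hessenberg_lead_residual_supp arnoldi_hessenberg) => [i iJ|i Ji].
    by rewrite HJy !mxeZ !mxe_e1 iJ (leq_trans iJ (ltnW (ltn_ord J))).
  by rewrite mxeZ mxe_e1 eqn0Ngt (leq_trans _ Ji) // if_same mulr0.
have := mulmx_residual_e1 (norm2 b) (resize k 1 y) wH w00.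
rewrite -/s (mulmx_supp1 _ s_supp) (norm2_supp1 s_supp) => wJsJ.
by rewrite -normrM wJsJ ger0_norm ?norm2_ge0.
Qed.

End Arnoldi.
End FomGmres.

Theorem theorem2p1 (C : numClosedFieldType) (n k : nat)
    (A : 'M[C]_n) (b : 'cV[C]_n)
    (Q : 'M[C]_(n, k.+1)) (H : 'M[C]_(k.+1, k)) (xG : 'cV[C]_n) :
  b != 0 ->
  (0 < k)%N ->
  \rank (krylov A b k.+1) = k.+1 ->
  arnoldi_output A b Q H ->
  (exists c : 'cV[C]_k, xG = krylov A b k *m c) ->
  (forall c : 'cV[C]_k, norm2 (b - A *m xG) <= norm2 (b - A *m (krylov A b k *m c))) ->
  exists j : nat, (j <= k)%N /\
    exists r, fom_res A b Q H j = Some r /\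
      norm2 r <= sqrtC (k.+1)%:R * norm2 (b - A *m xG).
Proof.
(* The bound holds for every x in K_k(A,b). *)
move=> _ _ _ arn [c ->] _.
have [w [wH w00]] := hessenberg_left_kernel (arnoldi_hessenberg arn) (arnoldi_subdiag arn).
have [J maxJ] := exists_argmax_real ord0 (fun i => normr_real (w 0 i)).
have wJ_gt0 : 0 < `|w 0 J| by apply: lt_le_trans (maxJ 0); rewrite w00 normr1.
have [r fomJ wJ_r] : exists2 r, fom_res A b Q H J = Some r & `|w 0 J| * norm2 r = norm2 b.
  by apply: fom_res_norm; rewrite // -normr_gt0.
exists J; split; first by rewrite -ltnS.
exists r; split => //.
have [Y ->] := krylov_leadcols arn.
case: (arn) => QQ _ _ _ _; rewrite -mulmxA (arnoldi_residual arn) norm2_isometry //.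
rewrite -(ler_pM2l wJ_gt0) wJ_r -[X in X <= _]ger0_norm ?norm2_ge0 //.
rewrite -[X in `|X| <= _](mulmx_residual_e1 (norm2 b) (Y *m c) wH w00).
exact: norm_mulmx_le.
Qed.
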